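(* For all $m\ge2$ and $n\ge1$, $CP_{m,n}\cap SDNN_{m,n}=SCP_{m,n}$.
   Context: $\mathbb{S}_{m,n}$: symmetric real $m$th order $n$-dimensional tensors. $(u^m)_{i_1\ldots i_m}=u_{i_1}\cdots u_{i_m}$; $(\mathcal{A}x^{m-1})_i=\sum_{i_2,\dots,i_m}a_{ii_2\ldots i_m}x_{i_2}\cdots x_{i_m}$; an H-eigenvalue of $\mathcal{A}$ is $\lambda\in\mathbb{R}$ with $\mathcal{A}x^{m-1}=\lambda(x_i^{m-1})_i$ for some nonzero $x\in\mathbb{R}^n$. $SDNN_{m,n}$ is the set of $\mathcal{A}\in\mathbb{S}_{m,n}$ with all entries nonnegative and all H-eigenvalues positive. $CP_{m,n}$ is the set of $\mathcal{A}=\sum_{k=1}^r(u^{(k)})^m$ with $u^{(k)}\in\mathbb{R}^n_+$; $SCP_{m,n}$ is the set of such $\mathcal{A}$ admitting a decomposition with $\mathrm{span}\{u^{(1)},\dots,u^{(r)}\}=\mathbb{R}^n$. *)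

From HB Require Import structures.
From mathcomp Require Import all_boot all_order all_algebra all_fingroup.
Set Implicit Arguments. Unset Strict Implicit. Unset Printing Implicit Defensive.
Import Order.TTheory GRing.Theory Num.Theory.
Local Open Scope ring_scope.

Definition tensor (R : rcfType) (m n : nat) := m.-tuple 'I_n -> R.

Definition is_sym (R : rcfType) (m n : nat) (A : tensor R m n) : Prop :=
  forall (s : 'S_m) (idx : m.-tuple 'I_n),
    A [tuple tnth idx (s j) | j < m] = A idx.

(* (A x^{m-1})_i = sum_{i_2..i_m} a_{i i_2 .. i_m} x_{i_2} ... x_{i_m} *)
Definition tapply (R : rcfType) (m n : nat) (A : tensor R m n) (x : 'I_n -> R)
    (i : 'I_n) : R :=
  \sum_(idx : m.-tuple 'I_n | head i idx == i) A idx * \prod_(k <- behead idx) x k.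

Definition is_H_eigenvalue (R : rcfType) (m n : nat) (A : tensor R m n) (lam : R) : Prop :=
  exists x : 'I_n -> R, (exists i, x i != 0) /\
    forall i, tapply A x i = lam * x i ^+ (m - 1).

Definition rank1 (R : rcfType) (n : nat) (m : nat) (u : 'I_n -> R) : tensor R m n :=
  fun idx => \prod_(k <- idx) u k.

Definition SDNN (R : rcfType) (m n : nat) (A : tensor R m n) : Prop :=
  is_sym A /\ (forall idx, 0 <= A idx) /\
  (forall lam, is_H_eigenvalue A lam -> 0 < lam).

Definition CP (R : rcfType) (m n : nat) (A : tensor R m n) : Prop :=
  exists (r : nat) (u : 'I_r -> 'I_n -> R),
    (forall k i, 0 <= u k i) /\
    (forall idx, A idx = \sum_(k < r) @rank1 R n m (u k) idx).

Definition spans_all (R : rcfType) (n r : nat) (u : 'I_r -> 'I_n -> R) : Prop :=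
  forall y : 'I_n -> R, exists c : 'I_r -> R,
    forall i, y i = \sum_(k < r) c k * u k i.

Definition SCP (R : rcfType) (m n : nat) (A : tensor R m n) : Prop :=
  exists (r : nat) (u : 'I_r -> 'I_n -> R),
    (forall k i, 0 <= u k i) /\
    (forall idx, A idx = \sum_(k < r) @rank1 R n m (u k) idx) /\
    spans_all u.

From Pilot Require Import Defs.
From mathcomp Require Import all_boot all_order all_algebra all_fingroup.
Set Implicit Arguments. Unset Strict Implicit. Unset Printing Implicit Defensive.
Import Order.TTheory GRing.Theory Num.Theory.
Local Open Scope ring_scope.

(* A decomposition A = sum_k (u_k)^m gives (A x^(m-1))_i = sum_k u_k,i <u_k, x>^(m-1).
   If the u_k do not span R^n, a nonzero x orthogonal to all of them is an
   H-eigenvector for the eigenvalue 0, so positivity of the H-eigenvalues forces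
   spanning. Conversely, when the u_k span, an eigenvector x has <u_k, x> <> 0 for
   some k, and pairing the eigen-equation with x (m even) or with the all-ones
   vector (m odd) writes lambda times a positive sum as a positive sum. *)

Definition fdot (R : pzSemiRingType) (n : nat) (u x : 'I_n -> R) : R :=
  \sum_i u i * x i.

Section Spanning.
Variables (R : rcfType) (n r : nat) (u : 'I_r -> 'I_n -> R).

Lemma spans_all_orthP :
  spans_all u <-> forall x, (forall k, fdot (u k) x = 0) -> x =1 (fun=> 0).
Proof.
pose U : 'M[R]_(r, n) := \matrix_(k, i) u k i.
split=> [Hsp x orth_x | orth0 y].
  have [c Hc] := Hsp x.
  have xx0 : \sum_i x i ^+ 2 = 0.
    transitivity (\sum_k c k * fdot (u k) x); last first.
      by rewrite big1 // => k _; rewrite orth_x mulr0.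
    under eq_bigr do rewrite expr2 {1}Hc mulr_suml.
    rewrite exchange_big; apply: eq_bigr => k _.
    by rewrite /fdot mulr_sumr; apply: eq_bigr => i _; rewrite mulrA.
  by move=> i; apply/eqP; rewrite -sqrf_eq0 (psumr_eq0P _ xx0) // => j _; exact: sqr_ge0.
have /submxP [D HD] : (\row_i y i <= U)%MS.
  rewrite submx_full //; apply: contraT => not_full.
  have [C UC nzC] : exists2 C : 'M_n, U *m C = 0 & C != 0.
    exists (cokermx U); first exact: mulmx_coker.
    by rewrite -mxrank_eq0 mxrank_coker subn_eq0 -ltnNge ltn_neqAle rank_leq_col andbT.
  suff C0 : C = 0 by rewrite C0 eqxx in nzC.
  apply/matrixP => i j; rewrite [RHS]mxE.
  apply: (orth0 (fun l => C l j)) => k.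
  have := congr1 (fun M : 'M[R]_(r, n) => M k j) UC.
  by rewrite !mxE => <-; apply: eq_bigr => l _; rewrite mxE.
exists (fun k => D 0 k) => i.
have := congr1 (fun M : 'M[R]_(1, n) => M 0 i) HD; rewrite !mxE => ->.
by apply: eq_bigr => k _; rewrite mxE.
Qed.

End Spanning.

Lemma psumr_gt0 (R : numDomainType) (I : finType) (F : I -> R) i0 :
  (forall i, 0 <= F i) -> 0 < F i0 -> 0 < \sum_i F i.
Proof.
move=> F_ge0 Fi0_gt0; rewrite (bigD1 i0) //=.
by rewrite ltr_pwDl // sumr_ge0.
Qed.

Lemma eigen_weighted_sum (R : comPzRingType) n r p (u : 'I_r -> 'I_n -> R)
    (x w : 'I_n -> R) (lam : R) :
  (forall i, \sum_k u k i * fdot (u k) x ^+ p = lam * x i ^+ p) ->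
  lam * \sum_i w i * x i ^+ p = \sum_k fdot (u k) w * fdot (u k) x ^+ p.
Proof.
move=> Hx; rewrite mulr_sumr.
under eq_bigr do rewrite mulrCA -Hx mulr_sumr.
rewrite exchange_big; apply: eq_bigr => k _.
by rewrite /fdot mulr_suml; apply: eq_bigr => i _; rewrite mulrCA mulrA.
Qed.

(* Test the eigen-equation against x when p is odd, against the all-ones vector
   when p is even: both sides become sums of nonnegative terms, one positive. *)
Lemma nonneg_eigen_gt0 (R : realFieldType) n r p (u : 'I_r -> 'I_n -> R)
    (x : 'I_n -> R) (lam : R) :
  (forall k i, 0 <= u k i) -> (exists i, x i != 0) -> (exists k, fdot (u k) x != 0) ->
  (forall i, \sum_k u k i * fdot (u k) x ^+ p = lam * x i ^+ p) -> 0 < lam.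
Proof.
move=> u_ge0 [i0 xi0] [k0 sk0] Hx.
have pow_gt0 (y : R) q : ~~ odd q -> y != 0 -> 0 < y ^+ q.
  by move=> q_even y0; rewrite exprn_even_gt0 // y0 orbT.
have [p_odd | p_even] := boolP (odd p).
  have even_Sp : ~~ odd p.+1 by rewrite /= p_odd.
  have x_gt0 : 0 < \sum_i x i * x i ^+ p.
    by apply: (psumr_gt0 (i0 := i0)) => [i|]; rewrite -exprS; [exact: exprn_even_ge0 | exact: pow_gt0].
  rewrite -(pmulr_lgt0 _ x_gt0) (eigen_weighted_sum x Hx).
  by apply: (psumr_gt0 (i0 := k0)) => [k|]; rewrite -exprS; [exact: exprn_even_ge0 | exact: pow_gt0].
have x_gt0 : 0 < \sum_i 1 * x i ^+ p.
  by apply: (psumr_gt0 (i0 := i0)) => [i|]; rewrite mul1r; [exact: exprn_even_ge0 | exact: pow_gt0].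
rewrite -(pmulr_lgt0 _ x_gt0) (eigen_weighted_sum (fun=> 1) Hx).
have [j0 uxj0] : exists j, u k0 j * x j != 0.
  apply/existsP; apply: contraR sk0 => /existsPn ux0.
  by apply/eqP/big1 => j _; apply/eqP; rewrite -[_ == _]negbK ux0.
have uk0_gt0 : 0 < fdot (u k0) (fun=> 1).
  apply: (psumr_gt0 (i0 := j0)) => [i|]; rewrite mulr1 // lt0r u_ge0 andbT.
  by apply: contraNneq uxj0 => ->; rewrite mul0r.
apply: (psumr_gt0 (i0 := k0)) => [k|]; last by rewrite mulr_gt0 // pow_gt0.
by rewrite mulr_ge0 ?exprn_even_ge0 ?sumr_ge0 // => i _; rewrite mulr1.
Qed.

Section TupleSums.
Variables (R : pzSemiRingType) (n : nat).

Lemma sum_tuple_cons m (F : m.+1.-tuple 'I_n -> R) :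
  \sum_(t : m.+1.-tuple 'I_n) F t = \sum_a \sum_(t : m.-tuple 'I_n) F (cons_tuple a t).
Proof.
rewrite pair_big /= (reindex (fun p : 'I_n * m.-tuple 'I_n => cons_tuple p.1 p.2)) //=.
exists (fun t => (thead t, behead_tuple t)) => [[a t] _ | t _].
  by congr pair; apply: val_inj.
apply: val_inj => /=.
by case: t => [[|a s] //= _]; rewrite /thead (tnth_nth a).
Qed.

Lemma sum_tuple_prod m (f : 'I_n -> R) :
  \sum_(t : m.-tuple 'I_n) \prod_(j <- t) f j = (\sum_j f j) ^+ m.
Proof.
elim: m => [|m IHm].
  rewrite (eq_bigr (fun=> 1)) => [|t _]; last by rewrite tuple0 big_nil.
  by rewrite sumr_const card_tuple expn0 expr0.
rewrite sum_tuple_cons exprS mulr_suml; apply: eq_bigr => a _.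
by rewrite -IHm mulr_sumr; apply: eq_bigr => t _; rewrite big_cons.
Qed.

Lemma sum_tuple_head m i (F : m.+1.-tuple 'I_n -> R) :
  \sum_(t : m.+1.-tuple 'I_n | head i t == i) F t =
  \sum_(t : m.-tuple 'I_n) F (cons_tuple i t).
Proof.
rewrite big_mkcond sum_tuple_cons (bigD1 i) //= [X in _ + X]big1 ?addr0.
  by apply: eq_bigr => t _; rewrite eqxx.
by move=> a /negbTE neq_ai; apply: big1 => t _; rewrite neq_ai.
Qed.

End TupleSums.

Section CompletelyPositive.
Variables (R : rcfType) (n r : nat) (u : 'I_r -> 'I_n -> R).

Definition is_rank1_sum m (A : tensor R m n) : Prop :=
  forall idx, A idx = \sum_k @rank1 R n m (u k) idx.

Lemma rank1_sum_sym m (A : tensor R m n) :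
  is_rank1_sum A -> Defs.is_sym A.
Proof.
move=> defA s idx; rewrite !defA; apply: eq_bigr => k _.
rewrite /rank1 !big_tuple; under eq_bigr do rewrite tnth_mktuple.
by rewrite -(reindex_inj (@perm_inj _ s) (P := xpredT) (F := fun j => u k (tnth idx j))).
Qed.

Lemma rank1_sum_ge0 m (A : tensor R m n) :
  (forall k i, 0 <= u k i) -> is_rank1_sum A ->
  forall idx, 0 <= A idx.
Proof.
move=> u_ge0 defA idx; rewrite defA.
by apply: sumr_ge0 => k _; apply: prodr_ge0.
Qed.

Lemma tapply_rank1_sum m (A : tensor R m.+1 n) x i :
  is_rank1_sum A ->
  tapply A x i = \sum_k u k i * fdot (u k) x ^+ m.
Proof.
move=> defA; rewrite /tapply sum_tuple_head.
under eq_bigr do rewrite defA /rank1 /= mulr_suml.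
rewrite exchange_big; apply: eq_bigr => k _.
rewrite /fdot -sum_tuple_prod mulr_sumr; apply: eq_bigr => t _.
by rewrite big_cons -mulrA big_split.
Qed.

Lemma H_eigenvalue0_of_orth m (A : tensor R m.+2 n) (x : 'I_n -> R) :
  is_rank1_sum A -> (exists i, x i != 0) -> (forall k, fdot (u k) x = 0) ->
  is_H_eigenvalue A 0.
Proof.
move=> defA nz_x orth_x; exists x; split=> // i.
rewrite (tapply_rank1_sum _ _ defA) mul0r big1 // => k _.
by rewrite orth_x expr0n mulr0.
Qed.

Lemma rank1_sum_H_eigenvalue_gt0 m (A : tensor R m.+1 n) lam :
  (forall k i, 0 <= u k i) -> spans_all u -> is_rank1_sum A ->
  is_H_eigenvalue A lam -> 0 < lam.
Proof.
move=> u_ge0 /spans_all_orthP span defA [x [[i xi0] Hx]].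
apply: (nonneg_eigen_gt0 (p := m) u_ge0 (ex_intro _ i xi0)).
  apply/existsP; apply: contraNT xi0 => /existsPn orth_x.
  by apply/eqP/span => k; apply/eqP; rewrite -[_ == _]negbK orth_x.
by move=> j; rewrite -(tapply_rank1_sum _ _ defA) Hx subn1.
Qed.

End CompletelyPositive.

Theorem mainTheorem12 (R : rcfType) (m n : nat) (hm : (2 <= m)%N) (hn : (1 <= n)%N)
    (A : tensor R m n) :
  (CP A /\ SDNN A) <-> SCP A.
Proof.
case: m hm A => [|[|m]] // _ A; split.
- move=> [[r [u [u_ge0 defA]]] [_ [_ eigen_gt0]]].
  exists r, u; do !split=> //; apply/spans_all_orthP => x orth_x i.
  apply/eqP; apply: contraT => xi0.
  by have := eigen_gt0 _ (H_eigenvalue0_of_orth defA (ex_intro _ i xi0) orth_x); rewrite ltxx.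
- move=> [r [u [u_ge0 [defA span]]]].
  split; first by exists r, u.
  do !split; [exact: rank1_sum_sym defA | exact: rank1_sum_ge0 defA |].
  by move=> lam; exact: rank1_sum_H_eigenvalue_gt0 defA.
Qed.
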